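(* Let $F_1$ and $F_2$ be finite fields with $|F_1|\le|F_2|$ and $\mathrm{char}(F_1)=2$. Then there exists a $(|F_1|-1)\times(|F_2|-1)$ Latin-sum array, with rows indexed by $A=F_1\setminus\{0\}$ and columns indexed by $B=F_2\setminus\{0\}$, over the alphabet $F_2\setminus\{0\}$.
   Context: Let $F_1,F_2$ be finite fields with $|F_1|\le|F_2|$, and let $A\subseteq F_1$, $B\subseteq F_2$ with $|A|\le|B|$. A table $L$ of size $|A|\times|B|$ with entries from a set $C$, whose rows are indexed by the elements of $A$ and columns by the elements of $B$ (entry $L_{x,y}$), is called a Latin-sum array over $C$ if for every two distinct pairs $(x_1,y_1),(x_2,y_2)\in A\times B$: (i) if $x_1+x_2=0$ in $F_1$ then $L_{x_1,y_1}\ne L_{x_2,y_2}$; and (ii) if $y_1+y_2=0$ in $F_2$ then $L_{x_1,y_1}\ne L_{x_2,y_2}$. *)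

From mathcomp Require Import all_boot all_algebra all_field.
Set Implicit Arguments. Unset Strict Implicit. Unset Printing Implicit Defensive.
Import GRing.Theory.
Local Open Scope ring_scope.

(* A table L of size |A| x |B| with entries in the set C: rows indexed by
   A ⊆ F1, columns by B ⊆ F2, entry L x y (values of L outside A × B are
   irrelevant). *)
Definition latin_sum_array (F1 F2 : finFieldType) (A : {set F1}) (B : {set F2})
  (T : eqType) (C : pred T) (L : F1 -> F2 -> T) : Prop :=
  (forall x y, x \in A -> y \in B -> L x y \in C) /\
  (forall x1 y1 x2 y2, x1 \in A -> y1 \in B -> x2 \in A -> y2 \in B ->
     (x1, y1) <> (x2, y2) ->
     (x1 + x2 = 0 -> L x1 y1 <> L x2 y2) /\
     (y1 + y2 = 0 -> L x1 y1 <> L x2 y2)).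

From mathcomp Require Import all_boot all_algebra all_field.
Set Implicit Arguments. Unset Strict Implicit. Unset Printing Implicit Defensive.
Import GRing.Theory.
Local Open Scope ring_scope.

(* In characteristic 2 the sum condition x1 + x2 = 0 just says x1 = x2, so the
   rows only need distinct entries.  If F2 also has characteristic 2 the same
   holds for columns, and L x y := y * i x works for any zero-preserving
   injection i : F1 -> F2.  Otherwise y1 + y2 = 0 forces y1 <> y2 for nonzero
   entries, and L x y := y already works. *)

Lemma addr_eq0_pchar2 (R : nzRingType) : 2 \in [pchar R] ->
  forall x y : R, (x + y == 0) = (x == y).
Proof. by move=> R2 x y; rewrite addr_eq0 (oppr_pchar2 R2). Qed.

Lemma addrr_neq0 (F : fieldType) (x : F) :
  2 \notin [pchar F] -> x != 0 -> x + x != 0.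
Proof. by move=> F_pchar_neq2 x_neq0; rewrite -mulr2n -mulr_natl mulf_neq0. Qed.

Lemma card_leq_inj (T U : finType) :
  (#|T| <= #|U|)%N -> exists f : T -> U, injective f.
Proof.
move=> leTU; exists (fun x => enum_val (widen_ord leTU (enum_rank x))).
by move=> x y /enum_val_inj /(congr1 val) /= /val_inj; apply: enum_rank_inj.
Qed.

Lemma card_leq_inj0 (V W : finZmodType) :
  (#|V| <= #|W|)%N -> exists f : V -> W, injective f /\ f 0 = 0.
Proof.
case/card_leq_inj => g g_inj; exists (fun x => g x - g 0); split.
  by move=> x y /addIr /g_inj.
by rewrite subrr.
Qed.

Section CharacteristicTwoRows.

Variables (F1 F2 : finFieldType).
Hypothesis F1_pchar2 : 2 \in [pchar F1].

Local Notation A := [set x : F1 | x != 0].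
Local Notation B := [set y : F2 | y != 0].

Lemma latin_sum_array_scaled (i : F1 -> F2) :
  2 \in [pchar F2] -> injective i -> i 0 = 0 ->
  latin_sum_array A B [pred z : F2 | z != 0] (fun x y => y * i x).
Proof.
move=> F2_pchar2 i_inj i0.
have i_neq0 x : x != 0 -> i x != 0 by rewrite -i0 (inj_eq i_inj).
split=> [x y|x1 y1 x2 y2]; rewrite !inE.
  by move=> x_neq0 y_neq0; rewrite mulf_neq0 ?i_neq0.
move=> x1_neq0 y1_neq0 _ _ neq_pairs; split.
- move/eqP; rewrite addr_eq0_pchar2 // => /eqP eq_x; subst x2 => /mulIf eq_y.
  by apply: neq_pairs; rewrite (eq_y (i_neq0 _ x1_neq0)).
- move/eqP; rewrite addr_eq0_pchar2 // => /eqP eq_y; subst y2 => /mulfI eq_i.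
  by apply: neq_pairs; rewrite (i_inj _ _ (eq_i y1_neq0)).
Qed.

Lemma latin_sum_array_columns :
  2 \notin [pchar F2] ->
  latin_sum_array A B [pred z : F2 | z != 0] (fun _ y => y).
Proof.
move=> F2_pchar_neq2; split=> [x y|x1 y1 x2 y2]; rewrite !inE //.
move=> _ y1_neq0 _ _ neq_pairs; split=> [/eqP|] sum0 eq_y.
- move: sum0; rewrite addr_eq0_pchar2 // => /eqP eq_x.
  by apply: neq_pairs; rewrite eq_x eq_y.
- by move: sum0; rewrite -eq_y => /eqP; apply/negP/addrr_neq0.
Qed.

End CharacteristicTwoRows.

Theorem lemma18 (F1 F2 : finFieldType) :
  (#|F1| <= #|F2|)%N -> (2 \in [pchar F1])%N ->
  exists L : F1 -> F2 -> F2,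
    latin_sum_array [set x : F1 | x != 0] [set y : F2 | y != 0]
      [pred z : F2 | z != 0] L.
Proof.
move=> leF12 F1_pchar2.
have [F2_pchar2 | F2_pchar_neq2] := boolP (2 \in [pchar F2]).
- have [i [i_inj i0]] := card_leq_inj0 leF12.
  by exists (fun x y => y * i x); apply: latin_sum_array_scaled.
- by exists (fun _ y => y); apply: latin_sum_array_columns.
Qed.
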